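(* Let $0<\alpha<1$, $h>0$, $x_0\in\mathbb{R}$, and let $G:\mathbb{R}\to\mathbb{R}$ be continuous. Let $U:\{1,2,3,\dots\}\to\mathbb{R}$ be either $U(n)=n^{\alpha-1}$ (the fractional case) or $U(n)=\dfrac{\Gamma(n+\alpha-1)}{\Gamma(n)}$ (the fractional difference case). Let $(x_n)_{n\ge 0}$ be a real sequence satisfying $$x_{n+1}=x_0-\frac{h^{\alpha}}{\Gamma(\alpha)}\sum_{k=0}^{n}G(x_k)\,U(n-k+1),\qquad n\ge 0.$$ Let $W_\alpha=\sum_{n=1}^{\infty}\bigl[U(2n-1)-U(2n)\bigr]$ (a convergent series). Suppose that the limits $x_o=\lim_{n\to\infty}x_{2n+1}$ and $x_e=\lim_{n\to\infty}x_{2n}$ exist in $\mathbb{R}$ (an asymptotic period-two sink). Then $$G(x_o)+G(x_e)=0,\qquad x_o-x_e=\frac{W_\alpha}{\Gamma(\alpha)}\,h^{\alpha}\bigl[G(x_o)-G(x_e)\bigr].$$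
   Context: The recursion is the common form, for $0<\alpha<1$, of the Riemann–Liouville and Caputo universal fractional maps (kernel $U(n)=n^{\alpha-1}$) and of the Caputo $h$-difference universal map (kernel $U(n)=\Gamma(n+\alpha-1)/\Gamma(n)$, the falling factorial $(n+\alpha-2)^{(\alpha-1)}$); here $G=G_K$ is the nonlinearity of the map. Note $U(1)=1$ in the first case and $U(1)=\Gamma(\alpha)$ in the second. *)

From Stdlib Require Import Reals.
From Coquelicot Require Import Coquelicot.
Open Scope R_scope.

(* Euler's Gamma function, defined (for x > 0) by the improper integral
   Gamma(x) = \int_0^{+oo} t^(x-1) e^(-t) dt.
   Only positive arguments are used in the statement. *)
Definition Gamma (x : R) : R :=
  RInt_gen (fun t => Rpower t (x - 1) * exp (- t))
           (at_right 0) (Rbar_locally p_infty).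

Definition U_frac (alpha : R) (n : nat) : R := Rpower (INR n) (alpha - 1).
Definition U_diff (alpha : R) (n : nat) : R :=
  Gamma (INR n + alpha - 1) / Gamma (INR n).

(* W_alpha = sum_{n>=1} [U(2n-1) - U(2n)], reindexed from m = n-1 >= 0. *)
Definition W_alpha (U : nat -> R) : R :=
  Series (fun m => U (2 * m + 1)%nat - U (2 * m + 2)%nat).

(* Write y_k = G(x_k), c = h^alpha / Gamma(alpha), and split the memory sum by the parity of k.
   The jump x_{2m+2} - x_{2m+1} is c times the convolutions of the even and odd subsequences of y
   with the nonnegative summable weights U(2j+1) - U(2j+2) (total W_alpha) and U(2j) - U(2j+1)
   (total U(1) - W_alpha), minus c y_{2m+1} U(1); a Toeplitz argument gives its limit
   c W_alpha (G(x_e) - G(x_o)).  Likewise, convergence of x_{2m+2} makes the convolution of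
   y_{2i} + y_{2i+1} with U(2j+1) converge; as U(n) >= kappa / n these weights are not summable,
   which forces G(x_e) + G(x_o) = 0.  Both kernels are nonincreasing, tend to 0 and dominate
   kappa / n; for the difference kernel this follows from U(n+1) / U(n) = (n + alpha - 1) / n,
   i.e. from Gamma(s+1) = s Gamma(s), obtained from the integral by integration by parts. *)

From Stdlib Require Import Reals Lra Lia.
From Coquelicot Require Import Coquelicot.
Open Scope R_scope.

(** * Convolutions and Toeplitz-type limits *)

Definition conv (z w : nat -> R) (m : nat) : R :=
  sum_f_R0 (fun i => z i * w (m - i)%nat) m.

Definition delay (w : nat -> R) (j : nat) : R :=
  match j with O => 0 | S j' => w j' end.

Lemma sum_f_R0_pairs (f : nat -> R) (m : nat) :
  sum_f_R0 f (2 * m + 1) =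
  sum_f_R0 (fun i => f (2 * i)%nat + f (2 * i + 1)%nat) m.
Proof.
  induction m as [|m IH]; [reflexivity|].
  replace (2 * S m + 1)%nat with (S (S (2 * m + 1))) by lia.
  rewrite tech5, tech5, IH, tech5.
  replace (2 * S m)%nat with (S (2 * m + 1)) by lia.
  replace (S (2 * m + 1) + 1)%nat with (S (S (2 * m + 1))) by lia.
  ring.
Qed.

Lemma sum_f_R0_rev (f : nat -> R) (m : nat) :
  sum_f_R0 (fun i => f (m - i)%nat) m = sum_f_R0 f m.
Proof.
  revert f; induction m as [|m IH]; intro f; [reflexivity|].
  rewrite decomp_sum by lia; simpl pred.
  rewrite tech5, Nat.sub_0_r, <- (IH f).
  simpl; ring.
Qed.

Lemma conv_split_parity (z w : nat -> R) (m : nat) :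
  conv z w (2 * m + 1) =
  conv (fun i => z (2 * i)%nat) (fun j => w (2 * j + 1)%nat) m +
  conv (fun i => z (2 * i + 1)%nat) (fun j => w (2 * j)%nat) m.
Proof.
  unfold conv; rewrite sum_f_R0_pairs, <- plus_sum.
  apply sum_eq; intros i Hi.
  replace (2 * m + 1 - 2 * i)%nat with (2 * (m - i) + 1)%nat by lia.
  replace (2 * m + 1 - (2 * i + 1))%nat with (2 * (m - i))%nat by lia.
  reflexivity.
Qed.

Lemma conv_delay (z w : nat -> R) (n : nat) : conv z (delay w) (S n) = conv z w n.
Proof.
  unfold conv; rewrite tech5, Nat.sub_diag.
  rewrite (sum_eq _ (fun i => z i * w (n - i)%nat)); [simpl; ring|].
  intros i Hi; now rewrite Nat.sub_succ_l.
Qed.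

Lemma conv_ext (z w w' : nat -> R) (m : nat) :
  (forall j, (j <= m)%nat -> w j = w' j) -> conv z w m = conv z w' m.
Proof.
  intro Hw; unfold conv; apply sum_eq; intros i Hi; rewrite Hw by lia; reflexivity.
Qed.

Lemma conv_plus_l (z1 z2 w : nat -> R) (m : nat) :
  conv (fun i => z1 i + z2 i) w m = conv z1 w m + conv z2 w m.
Proof. unfold conv; rewrite <- plus_sum; apply sum_eq; intros; ring. Qed.

Lemma conv_minus_r (z w1 w2 : nat -> R) (m : nat) :
  conv z (fun j => w1 j - w2 j) m = conv z w1 m - conv z w2 m.
Proof. unfold conv; rewrite <- minus_sum; apply sum_eq; intros; ring. Qed.

Lemma conv_change_head (z w w' : nat -> R) (m : nat) :
  (forall j, (1 <= j)%nat -> w' j = w j) ->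
  conv z w' m = conv z w m + z m * (w' O - w O).
Proof.
  intros Hw; unfold conv; destruct m as [|m]; [simpl; ring|].
  rewrite !tech5, Nat.sub_diag.
  rewrite (sum_eq (fun i => z i * w' (S m - i)%nat) (fun i => z i * w (S m - i)%nat));
    [ring|].
  intros i Hi; rewrite Hw by lia; reflexivity.
Qed.

Lemma conv_center (z w : nat -> R) (L : R) (m : nat) :
  conv z w m = L * sum_f_R0 w m + conv (fun i => z i - L) w m.
Proof.
  unfold conv; rewrite <- (sum_f_R0_rev w m), scal_sum, <- plus_sum.
  apply sum_eq; intros; ring.
Qed.

Lemma prefix_bound (f : nat -> R) (N : nat) :
  exists B, 0 <= B /\ forall i, (i <= N)%nat -> Rabs (f i) <= B.
Proof.
  induction N as [|N [B [HB H]]].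
  - exists (Rabs (f O)); split; [apply Rabs_pos|].
    intros i Hi; replace i with O by lia; lra.
  - exists (Rmax B (Rabs (f (S N)))); split.
    + eapply Rle_trans; [exact HB | apply Rmax_l].
    + intros i Hi; destruct (Nat.eq_dec i (S N)) as [->|Hne]; [apply Rmax_r|].
      eapply Rle_trans; [apply H; lia | apply Rmax_l].
Qed.

Lemma sum_f_R0_indicator (K : R) (N m : nat) :
  sum_f_R0 (fun i => if Nat.leb i N then K else 0) m = K * INR (S (Nat.min m N)).
Proof.
  induction m as [|m IH]; [simpl; ring|].
  rewrite tech5, IH; destruct (Nat.leb (S m) N) eqn:E.
  - apply Nat.leb_le in E.
    replace (Nat.min m N) with m by lia; replace (Nat.min (S m) N) with (S m) by lia.
    rewrite (S_INR (S m)); ring.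
  - apply Nat.leb_gt in E.
    replace (Nat.min m N) with N by lia; replace (Nat.min (S m) N) with N by lia.
    ring.
Qed.

Lemma conv_split_bound (e w : nat -> R) (m N : nat) (eps B d : R) :
  (forall j, 0 <= w j) -> 0 <= eps ->
  (forall i, (i <= N)%nat -> Rabs (e i) <= B /\ w (m - i)%nat <= d) ->
  (forall i, (N < i)%nat -> Rabs (e i) <= eps) ->
  Rabs (conv e w m) <= B * d * INR (S N) + eps * sum_f_R0 w m.
Proof.
  intros Hw Heps Hhead Htail; unfold conv.
  eapply Rle_trans; [apply sum_f_R0_triangle|].
  eapply Rle_trans.
  { apply (sum_Rle _ (fun i => (if Nat.leb i N then B * d else 0) + eps * w (m - i)%nat)).
    intros i _; rewrite Rabs_mult, (Rabs_pos_eq (w _)) by apply Hw.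
    pose proof (Hw (m - i)%nat) as Hwi.
    destruct (Nat.leb i N) eqn:E.
    - apply Nat.leb_le in E; destruct (Hhead i E) as [He Hd].
      assert (Rabs (e i) * w (m - i)%nat <= B * d)
        by (apply Rmult_le_compat; auto using Rabs_pos).
      nra.
    - apply Nat.leb_gt in E; specialize (Htail i E).
      rewrite Rplus_0_l; apply Rmult_le_compat_r; lra. }
  rewrite plus_sum, sum_f_R0_indicator, <- (sum_f_R0_rev w m), scal_sum.
  apply Rplus_le_compat.
  - assert (0 <= B * d).
    { destruct (Hhead O (Nat.le_0_l N)) as [HB Hd].
      pose proof (Rabs_pos (e O)); pose proof (Hw (m - 0)%nat).
      apply Rmult_le_pos; lra. }
    apply Rmult_le_compat_l; [lra|]; apply le_INR; lia.
  - right; apply sum_eq; intros; ring.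
Qed.

Lemma sum_f_R0_le_lim (w : nat -> R) (W : R) :
  (forall j, 0 <= w j) -> is_lim_seq (sum_f_R0 w) W -> forall m, sum_f_R0 w m <= W.
Proof.
  intros Hw HW m; apply (is_lim_seq_incr_compare _ _ HW).
  intro n; rewrite tech5; specialize (Hw (S n)); lra.
Qed.

Lemma is_lim_seq_series_term (w : nat -> R) (W : R) :
  is_lim_seq (sum_f_R0 w) W -> is_lim_seq w 0.
Proof.
  intro HW; apply is_lim_seq_incr_1.
  apply is_lim_seq_ext with (fun n => sum_f_R0 w (S n) - sum_f_R0 w n).
  { intro n; rewrite tech5; ring. }
  replace (Finite 0) with (Rbar_minus W W) by (simpl; f_equal; ring).
  apply is_lim_seq_minus'; [apply (is_lim_seq_incr_1 (sum_f_R0 w))|]; exact HW.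
Qed.

Lemma is_lim_seq_minus_lim (z : nat -> R) (L : R) :
  is_lim_seq z L -> is_lim_seq (fun i => z i - L) 0.
Proof.
  intro Hz; replace (Finite 0) with (Rbar_minus L L) by (simpl; f_equal; ring).
  apply is_lim_seq_minus'; [exact Hz | apply is_lim_seq_const].
Qed.

Lemma is_lim_seq_conv_summable_0 (e w : nat -> R) (W : R) :
  is_lim_seq e 0 -> (forall j, 0 <= w j) -> is_lim_seq (sum_f_R0 w) W ->
  is_lim_seq (conv e w) 0.
Proof.
  intros He Hw HW.
  pose proof (sum_f_R0_le_lim w W Hw HW) as Hle.
  assert (HW0 : 0 <= W) by (specialize (Hle O); specialize (Hw O); simpl in Hle; lra).
  pose proof (is_lim_seq_series_term w W HW) as Hw0.
  apply is_lim_seq_Reals in He; apply is_lim_seq_Reals in Hw0.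
  apply is_lim_seq_Reals; intros eps Heps.
  set (eta := eps / (2 * (W + 1))).
  destruct (He eta) as [N HN]; [unfold eta; apply Rdiv_lt_0_compat; lra|].
  destruct (prefix_bound e N) as [B [HB0 HB]].
  assert (HSN : 0 < INR (S N)) by (apply lt_0_INR; lia).
  set (delta := eps / (2 * (B + 1) * INR (S N))).
  destruct (Hw0 delta) as [J HJ].
  { unfold delta; apply Rdiv_lt_0_compat; [lra|]; apply Rmult_lt_0_compat; lra. }
  exists (N + J)%nat; intros m Hm; unfold R_dist; rewrite Rminus_0_r.
  eapply Rle_lt_trans; [apply (conv_split_bound e w m N eta B delta); auto|].
  - unfold eta; apply Rlt_le, Rdiv_lt_0_compat; lra.
  - intros i Hi; split; [now apply HB|].
    specialize (HJ (m - i)%nat ltac:(lia)); unfold R_dist in HJ.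
    rewrite Rminus_0_r in HJ; pose proof (Rle_abs (w (m - i)%nat)); lra.
  - intros i Hi; specialize (HN i ltac:(lia)); unfold R_dist in HN.
    rewrite Rminus_0_r in HN; lra.
  - assert (E1 : B * delta * INR (S N) = eps / 2 * (B / (B + 1)))
      by (unfold delta; field; lra).
    assert (E2 : eta * W = eps / 2 * (W / (W + 1))) by (unfold eta; field; lra).
    assert (eps / 2 * (B / (B + 1)) < eps / 2 * 1)
      by (apply Rmult_lt_compat_l; [|apply (Rdiv_lt_1 B)]; lra).
    assert (eps / 2 * (W / (W + 1)) < eps / 2 * 1)
      by (apply Rmult_lt_compat_l; [|apply (Rdiv_lt_1 W)]; lra).
    assert (eta * sum_f_R0 w m <= eta * W).
    { apply Rmult_le_compat_l; [unfold eta; apply Rlt_le, Rdiv_lt_0_compat|]; auto; lra. }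
    lra.
Qed.

Lemma is_lim_seq_conv_summable (z w : nat -> R) (L W : R) :
  is_lim_seq z L -> (forall j, 0 <= w j) -> is_lim_seq (sum_f_R0 w) W ->
  is_lim_seq (conv z w) (L * W).
Proof.
  intros Hz Hw HW.
  apply is_lim_seq_ext with (fun m => L * sum_f_R0 w m + conv (fun i => z i - L) w m).
  { intro m; symmetry; apply conv_center. }
  replace (Finite (L * W)) with (Rbar_plus (L * W) 0) by (simpl; f_equal; ring).
  apply is_lim_seq_plus'.
  - exact (is_lim_seq_scal_l _ L _ HW).
  - exact (is_lim_seq_conv_summable_0 _ w W (is_lim_seq_minus_lim z L Hz) Hw HW).
Qed.

(* After centering at [s], [conv z w m] is [s * sum w] up to [K + |s| / 2 * sum w];
   this diverges unless [s = 0]. *)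
Lemma conv_divergent_weights_lim_0 (z w : nat -> R) (s l Wmax : R) :
  is_lim_seq z s -> (forall j, 0 <= w j <= Wmax) ->
  is_lim_seq (sum_f_R0 w) p_infty -> is_lim_seq (conv z w) l -> s = 0.
Proof.
  intros Hz Hw Hdiv Hconv.
  destruct (Req_dec s 0) as [|Hs]; [assumption | exfalso].
  assert (Has : 0 < Rabs s) by (apply Rabs_pos_lt; exact Hs).
  pose proof (is_lim_seq_minus_lim z s Hz) as He; apply is_lim_seq_Reals in He.
  destruct (He (Rabs s / 2) ltac:(lra)) as [N HN].
  destruct (prefix_bound (fun i => z i - s) N) as [B [HB0 HB]].
  set (K := B * Wmax * INR (S N)).
  apply is_lim_seq_spec in Hdiv; apply is_lim_seq_spec in Hconv.
  destruct (filter_ex _ (filter_and _ _ (Hdiv (2 * (Rabs l + 1 + K) / Rabs s))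
                                   (Hconv (mkposreal 1 Rlt_0_1))))
    as [m [Hbig Hnear]]; simpl in Hnear.
  assert (HC : Rabs (conv (fun i => z i - s) w m) <= K + Rabs s / 2 * sum_f_R0 w m).
  { apply conv_split_bound; [intro j; apply Hw | lra | |].
    - intros i Hi; split; [now apply HB | apply Hw].
    - intros i Hi; specialize (HN i ltac:(lia)); unfold R_dist in HN.
      rewrite Rminus_0_r in HN; lra. }
  rewrite (conv_center z w s m) in Hnear.
  set (C := conv (fun i => z i - s) w m) in *.
  assert (Hsum : 0 <= sum_f_R0 w m) by (apply cond_pos_sum; intro j; apply Hw).
  apply (Rmult_lt_compat_l (Rabs s)) in Hbig; [|exact Has].
  replace (Rabs s * (2 * (Rabs l + 1 + K) / Rabs s)) with (2 * (Rabs l + 1 + K))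
    in Hbig by (field; lra).
  assert (Habs : Rabs (s * sum_f_R0 w m) = Rabs s * sum_f_R0 w m)
    by (rewrite Rabs_mult, (Rabs_pos_eq (sum_f_R0 w m)); lra).
  pose proof (Rabs_triang (s * sum_f_R0 w m + C - l) (- (C - l))) as T1.
  replace (s * sum_f_R0 w m + C - l + - (C - l)) with (s * sum_f_R0 w m) in T1 by ring.
  pose proof (Rabs_triang C (- l)) as T2.
  rewrite Rabs_Ropp in T1, T2; fold (C - l) in T2.
  lra.
Qed.

(** * Fading-memory kernels *)

Record fading_memory_kernel (U : nat -> R) : Prop := {
  kernel_decr : forall n, (1 <= n)%nat -> U (S n) <= U n;
  kernel_cvg_0 : is_lim_seq U 0;
  kernel_ge_harmonic : exists kap, 0 < kap /\ forall n, (1 <= n)%nat -> kap / INR n <= U n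
}.

Lemma INR_ge_1 (n : nat) : (1 <= n)%nat -> 1 <= INR n.
Proof. intro Hn; apply (le_INR 1); exact Hn. Qed.

Lemma exp_le_exp (a b : R) : a <= b -> exp a <= exp b.
Proof. intros [H|H]; [left; now apply exp_increasing | right; now rewrite H]. Qed.

Lemma ln_1_plus_le (t : R) : -1 < t -> ln (1 + t) <= t.
Proof.
  intro Ht; rewrite <- (ln_exp t) at 2; apply ln_le; [lra | apply exp_ineq1_le].
Qed.

Lemma ln_le_harmonic (m : nat) : ln (INR m + 2) <= sum_f_R0 (fun j => / (INR j + 1)) m.
Proof.
  induction m as [|m IH].
  - simpl; replace (0 + 2) with (1 + 1) by ring; replace (/ (0 + 1)) with 1 by field.
    apply ln_1_plus_le; lra.
  - rewrite tech5, S_INR; pose proof (pos_INR m).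
    assert (Hq : 0 < / (INR m + 1 + 1)) by (apply Rinv_0_lt_compat; lra).
    replace (INR m + 1 + 2) with ((INR m + 2) * (1 + / (INR m + 1 + 1))) by (field; lra).
    rewrite ln_mult by lra.
    pose proof (ln_1_plus_le (/ (INR m + 1 + 1)) ltac:(lra)); lra.
Qed.


Lemma harmonic_divergent : is_lim_seq (sum_f_R0 (fun j => / (INR j + 1))) p_infty.
Proof.
  apply (is_lim_seq_le_p_loc _ _ (filter_forall _ ln_le_harmonic)).
  apply (filterlim_comp _ _ _ (fun n => INR n + 2) ln _ (Rbar_locally p_infty));
    [|exact is_lim_ln_p].
  apply (is_lim_seq_le_p_loc INR); [exists O; intros; lra | exact is_lim_seq_INR].
Qed.

Section FadingMemoryKernel.

Variable U : nat -> R.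
Hypothesis HU : fading_memory_kernel U.

Lemma kernel_pos (n : nat) : (1 <= n)%nat -> 0 < U n.
Proof.
  intro Hn; destruct (kernel_ge_harmonic U HU) as [kap [Hkap Hge]].
  eapply Rlt_le_trans; [|exact (Hge n Hn)].
  apply Rdiv_lt_0_compat; [exact Hkap|]; pose proof (INR_ge_1 n Hn); lra.
Qed.

Lemma kernel_le_1 (n : nat) : (1 <= n)%nat -> U n <= U 1%nat.
Proof.
  induction n as [|n IH]; intro Hn; [lia|].
  destruct (Nat.eq_dec n 0) as [->|Hne]; [lra|].
  pose proof (kernel_decr U HU n ltac:(lia)); specialize (IH ltac:(lia)); lra.
Qed.

Lemma kernel_odd_divergent : is_lim_seq (sum_f_R0 (fun j => U (2 * j + 1)%nat)) p_infty.
Proof.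
  destruct (kernel_ge_harmonic U HU) as [kap [Hkap Hge]].
  apply (is_lim_seq_le_p_loc (fun m => kap / 2 * sum_f_R0 (fun j => / (INR j + 1)) m)).
  - apply filter_forall; intro m; rewrite scal_sum; apply sum_Rle; intros j _.
    eapply Rle_trans; [|apply Hge; lia].
    rewrite plus_INR, mult_INR; simpl INR; pose proof (pos_INR j).
    replace (/ (INR j + 1) * (kap / 2)) with (kap / (2 * INR j + 2)) by (field; lra).
    apply Rmult_le_compat_l; [lra|]; apply Rinv_le_contravar; lra.
  - replace p_infty with (Rbar_mult (kap / 2) p_infty).
    + apply is_lim_seq_scal_l, harmonic_divergent.
    + rewrite Rbar_mult_comm; apply is_Rbar_mult_unique, is_Rbar_mult_p_infty_pos.
      simpl; lra.
Qed.

End FadingMemoryKernel.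

Lemma is_lim_seq_Rpower_INR (beta : R) : beta < 0 ->
  is_lim_seq (fun n => Rpower (INR n) beta) 0.
Proof.
  intro Hb.
  apply (is_lim_seq_ext_loc (fun n => exp (beta * ln (INR n)))).
  { exists 1%nat; intros n Hn; reflexivity. }
  apply (filterlim_comp _ _ _ (fun n => beta * ln (INR n)) exp _ (Rbar_locally m_infty)).
  - replace m_infty with (Rbar_mult beta p_infty).
    + apply is_lim_seq_scal_l.
      apply (filterlim_comp _ _ _ INR ln _ (Rbar_locally p_infty));
        [exact is_lim_seq_INR | exact is_lim_ln_p].
    + rewrite Rbar_mult_comm; apply is_Rbar_mult_unique, is_Rbar_mult_p_infty_neg.
      simpl; lra.
  - exact is_lim_exp_m.
Qed.

Lemma U_frac_kernel (alpha : R) : 0 < alpha < 1 -> fading_memory_kernel (U_frac alpha).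
Proof.
  intro Ha; unfold U_frac; split.
  - intros n Hn; pose proof (INR_ge_1 n Hn); unfold Rpower.
    apply exp_le_exp, Rmult_le_compat_neg_l; [lra|].
    apply ln_le; [lra|]; apply le_INR; lia.
  - apply is_lim_seq_Rpower_INR; lra.
  - exists 1; split; [lra|]; intros n Hn; pose proof (INR_ge_1 n Hn).
    replace (1 / INR n) with (Rpower (INR n) (Ropp 1))
      by (rewrite Rpower_Ropp, Rpower_1 by lra; field; lra).
    apply Rle_Rpower; lra.
Qed.

Lemma fading_memory_kernel_ext (U V : nat -> R) :
  (forall n, (1 <= n)%nat -> U n = V n) ->
  fading_memory_kernel V -> fading_memory_kernel U.
Proof.
  intros HUV [Hdecr Hcvg [kap [Hkap Hge]]]; split.
  - intros n Hn; rewrite !HUV by lia; now apply Hdecr.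
  - apply (is_lim_seq_ext_loc V); [|exact Hcvg].
    exists 1%nat; intros n Hn; symmetry; now apply HUV.
  - exists kap; split; [exact Hkap|]; intros n Hn; rewrite HUV by lia; now apply Hge.
Qed.

Lemma one_minus_mul_Rpower_le (b t : R) :
  0 <= b -> 0 <= t -> (1 - b * t) * Rpower (1 + t) b <= 1.
Proof.
  intros Hb Ht.
  assert (Hpow : 0 < Rpower (1 + t) b <= exp (b * t)).
  { unfold Rpower; split; [apply exp_pos|].
    apply exp_le_exp, Rmult_le_compat_l; [exact Hb|].
    apply ln_1_plus_le; lra. }
  destruct (Rle_lt_dec (1 - b * t) 0) as [Hneg|Hpos]; [nra|].
  pose proof (exp_ineq1_le (- (b * t))) as Hexp.
  apply Rle_trans with (exp (- (b * t)) * exp (b * t)).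
  - apply Rmult_le_compat; lra.
  - rewrite <- exp_plus, Rplus_opp_l, exp_0; lra.
Qed.

Section RatioKernel.

Variables (alpha : R) (U : nat -> R).
Hypothesis Halpha : 0 < alpha < 1.
Hypothesis HU1 : 0 < U 1%nat.
Hypothesis Hratio : forall n, (1 <= n)%nat -> U (S n) = U n * (INR n + alpha - 1) / INR n.

Lemma ratio_kernel_pos (n : nat) : (1 <= n)%nat -> 0 < U n.
Proof.
  induction n as [|n IH]; intro Hn; [lia|].
  destruct (Nat.eq_dec n 0) as [->|Hne]; [exact HU1|].
  rewrite (Hratio n) by lia; pose proof (INR_ge_1 n ltac:(lia)).
  specialize (IH ltac:(lia)).
  apply Rdiv_lt_0_compat; [apply Rmult_lt_0_compat|]; lra.
Qed.

Lemma ratio_kernel_lower (n : nat) : (1 <= n)%nat -> U 1%nat * alpha <= U n * (INR n - 1 + alpha).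
Proof.
  induction n as [|n IH]; intro Hn; [lia|].
  destruct (Nat.eq_dec n 0) as [->|Hne]; [simpl; right; ring|].
  specialize (IH ltac:(lia)); rewrite (Hratio n), S_INR by lia.
  pose proof (INR_ge_1 n ltac:(lia)); pose proof (ratio_kernel_pos n ltac:(lia)).
  replace (U n * (INR n + alpha - 1) / INR n * (INR n + 1 - 1 + alpha))
    with (U n * (INR n - 1 + alpha) * (1 + alpha / INR n)) by (field; lra).
  assert (0 <= alpha / INR n) by (apply Rdiv_le_0_compat; lra).
  assert (0 <= U n * (INR n - 1 + alpha)) by (apply Rmult_le_pos; lra).
  nra.
Qed.

Lemma ratio_kernel_upper (n : nat) : (1 <= n)%nat -> U n * Rpower (INR n) (1 - alpha) <= U 1%nat.
Proof.
  induction n as [|n IH]; intro Hn; [lia|].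
  destruct (Nat.eq_dec n 0) as [->|Hne].
  { simpl; unfold Rpower; rewrite ln_1, Rmult_0_r, exp_0; lra. }
  specialize (IH ltac:(lia)).
  pose proof (INR_ge_1 n ltac:(lia)); pose proof (ratio_kernel_pos n ltac:(lia)).
  assert (Hinv : 0 < / INR n) by (apply Rinv_0_lt_compat; lra).
  rewrite (Hratio n) by lia.
  replace (INR (S n)) with (INR n * (1 + / INR n)) by (rewrite S_INR; field; lra).
  rewrite <- Rpower_mult_distr by lra.
  pose proof (one_minus_mul_Rpower_le (1 - alpha) (/ INR n) ltac:(lra) ltac:(lra)).
  set (p := Rpower (INR n) (1 - alpha)) in *; set (q := Rpower (1 + / INR n) (1 - alpha)) in *.
  replace (U n * (INR n + alpha - 1) / INR n * (p * q))
    with (U n * p * ((1 - (1 - alpha) * / INR n) * q)) by (field; lra).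
  assert (0 < p) by apply exp_pos.
  assert (0 <= U n * p) by nra.
  nra.
Qed.

Lemma ratio_kernel : fading_memory_kernel U.
Proof.
  split.
  - intros n Hn; rewrite Hratio by exact Hn.
    pose proof (INR_ge_1 n Hn); pose proof (ratio_kernel_pos n Hn).
    apply Rmult_le_reg_r with (INR n); [lra|].
    unfold Rdiv; rewrite Rmult_assoc, Rinv_l by lra; nra.
  - apply (is_lim_seq_le_le_loc (fun _ => 0) _ (fun n => U 1%nat * Rpower (INR n) (alpha - 1))).
    + exists 1%nat; intros n Hn; split; [now apply Rlt_le, ratio_kernel_pos|].
      pose proof (ratio_kernel_upper n Hn) as Hup.
      assert (Hp : 0 < Rpower (INR n) (1 - alpha)) by apply exp_pos.
      replace (alpha - 1) with (- (1 - alpha)) by ring; rewrite Rpower_Ropp.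
      apply Rmult_le_reg_r with (Rpower (INR n) (1 - alpha)); [exact Hp|].
      rewrite Rmult_assoc, Rinv_l by lra; lra.
    + apply is_lim_seq_const.
    + replace (Finite 0) with (Rbar_mult (U 1%nat) 0) by (simpl; f_equal; ring).
      apply is_lim_seq_scal_l, is_lim_seq_Rpower_INR; lra.
  - exists (U 1%nat * alpha); split; [apply Rmult_lt_0_compat; lra|].
    intros n Hn; pose proof (ratio_kernel_lower n Hn).
    pose proof (INR_ge_1 n Hn); pose proof (ratio_kernel_pos n Hn).
    apply Rmult_le_reg_r with (INR n); [lra|].
    unfold Rdiv; rewrite Rmult_assoc, Rinv_l by lra; nra.
Qed.

End RatioKernel.

(** * Improper integrals and the Gamma function *)

Lemma filterlim_squeeze_0 {T : Type} {F : (T -> Prop) -> Prop} {FF : Filter F}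
  (g h : T -> R) :
  F (fun t => 0 <= g t <= h t) -> filterlim h F (locally 0) -> filterlim g F (locally 0).
Proof.
  intros Hgh Hh; apply filterlim_locally; intro eps.
  apply filterlim_locally with (eps := eps) in Hh.
  eapply filter_imp; [|exact (filter_and _ _ Hgh Hh)]; intros t [[H0 H1] Hb].
  change (Rabs (h t - 0) < eps) in Hb; change (Rabs (g t - 0) < eps).
  rewrite Rminus_0_r, Rabs_pos_eq in * by lra; lra.
Qed.

Section PositiveImproperIntegral.

Variable f : R -> R.
Hypothesis f_pos : forall t, 0 < t -> 0 < f t.
Hypothesis f_cont : forall t, 0 < t -> continuous f t.

Lemma ex_RInt_pos_axis (a b : R) : 0 < a -> 0 < b -> ex_RInt f a b.
Proof.
  intros Ha Hb; apply (@ex_RInt_continuous R_CompleteNormedModule).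
  intros t Ht; apply f_cont; pose proof (Rmin_glb_lt a b 0 Ha Hb); lra.
Qed.

Lemma RInt_pos_axis_mono (a a' b' b : R) :
  0 < a -> a <= a' -> a' <= b' -> b' <= b -> RInt f a' b' <= RInt f a b.
Proof.
  intros Ha H1 H2 H3.
  rewrite <- (RInt_Chasles f a a' b), <- (RInt_Chasles f a' b' b)
    by (apply ex_RInt_pos_axis; lra).
  assert (0 <= RInt f a a')
    by (apply RInt_ge_0; [lra | apply ex_RInt_pos_axis; lra | intros; left; apply f_pos; lra]).
  assert (0 <= RInt f b' b)
    by (apply RInt_ge_0; [lra | apply ex_RInt_pos_axis; lra | intros; left; apply f_pos; lra]).
  change plus with Rplus; lra.
Qed.

Lemma is_RInt_gen_pos_sup (l : R) :
  (forall a b, 0 < a <= b -> RInt f a b <= l) ->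
  (forall eps, 0 < eps -> exists a b, 0 < a <= b /\ l - eps < RInt f a b) ->
  is_RInt_gen f (at_right 0) (Rbar_locally p_infty) l.
Proof.
  intros Hub Hlb; unfold is_RInt_gen, filterlimi, filter_le, filtermapi.
  intros P [eps HP]; destruct (Hlb eps (cond_pos eps)) as [a0 [b0 [[Ha0 Hab0] Hl]]].
  apply (Filter_prod _ _ _ (fun a => 0 < a < a0) (fun b => b0 < b)).
  - exists (mkposreal _ Ha0); intros a Ha Hapos.
    change (Rabs (a - 0) < a0) in Ha; rewrite Rminus_0_r, Rabs_pos_eq in Ha by lra; lra.
  - exists b0; auto.
  - intros a b [Ha1 Ha2] Hb; exists (RInt f a b); split.
    { apply (@RInt_correct R_CompleteNormedModule), ex_RInt_pos_axis; simpl; lra. }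
    apply HP; change (Rabs (RInt f a b - l) < eps).
    assert (RInt f a0 b0 <= RInt f a b) by (apply RInt_pos_axis_mono; simpl; lra).
    assert (RInt f a b <= l) by (apply Hub; simpl; lra).
    rewrite Rabs_minus_sym, Rabs_pos_eq; lra.
Qed.

(* Exhaust (0, +oo) by the intervals [1 / (n + 1), n + 1]; the integrals over
   them increase to a limit, which is the improper integral. *)
Lemma is_RInt_gen_pos_bounded (M : R) :
  (forall a b, 0 < a <= 1 -> 1 <= b -> RInt f a b <= M) ->
  exists l, 0 < l /\ is_RInt_gen f (at_right 0) (Rbar_locally p_infty) l.
Proof.
  intro HM.
  set (J := fun n => RInt f (/ (INR n + 1)) (INR n + 1)).
  assert (Hab : forall n, 0 < / (INR n + 1) <= 1 /\ 1 <= INR n + 1).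
  { intro n; pose proof (pos_INR n); split; [split|]; try lra.
    - apply Rinv_0_lt_compat; lra.
    - rewrite <- Rinv_1; apply Rinv_le_contravar; lra. }
  assert (Jincr : forall n, J n <= J (S n)).
  { intro n; unfold J; destruct (Hab n) as [[A1 A2] A3].
    rewrite S_INR; pose proof (pos_INR n).
    apply RInt_pos_axis_mono; try lra;
      [apply Rinv_0_lt_compat | apply Rinv_le_contravar]; lra. }
  destruct (ex_finite_lim_seq_incr J M Jincr (fun n => HM _ _ (proj1 (Hab n)) (proj2 (Hab n))))
    as [l HJ].
  assert (Hle := is_lim_seq_incr_compare J l HJ Jincr).
  exists l; split; [|apply is_RInt_gen_pos_sup].
  - apply Rlt_le_trans with (J 1%nat); [|apply Hle].
    unfold J; apply RInt_gt_0; simpl; [lra | intros; apply f_pos; lra |].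
    intros t Ht; apply f_cont; lra.
  - intros a b Hab'.
    destruct (INR_archimed 1 (b + / a) ltac:(lra)) as [K HK]; rewrite Rmult_1_r in HK.
    assert (0 < / a) by (apply Rinv_0_lt_compat; lra).
    apply Rle_trans with (J K); [|apply Hle].
    unfold J; destruct (Hab K) as [[B1 B2] B3]; apply RInt_pos_axis_mono; try lra.
    replace a with (/ / a) by (field; lra); apply Rinv_le_contravar; lra.
  - intros eps Heps; apply is_lim_seq_Reals in HJ; destruct (HJ eps Heps) as [N HN].
    specialize (HN N (le_n N)); unfold R_dist in HN; pose proof (Hle N).
    rewrite Rabs_minus_sym, Rabs_pos_eq in HN by lra.
    exists (/ (INR N + 1)), (INR N + 1); split; [|fold (J N); lra].
    destruct (Hab N); lra.
Qed.

End PositiveImproperIntegral.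

Definition gamma_integrand (s t : R) : R := Rpower t (s - 1) * exp (- t).

Definition is_Gamma (s l : R) : Prop :=
  is_RInt_gen (gamma_integrand s) (at_right 0) (Rbar_locally p_infty) l.

Lemma Gamma_of_is_Gamma (s l : R) : is_Gamma s l -> Gamma s = l.
Proof.
  apply (@is_RInt_gen_unique R_CompleteNormedModule (at_right 0) (Rbar_locally p_infty)
          (Proper_StrongProper _ (at_right_proper_filter 0))
          (Proper_StrongProper _ (Rbar_locally_filter p_infty))).
Qed.

Lemma exp_le_1 (t : R) : t <= 0 -> exp t <= 1.
Proof. intro Ht; rewrite <- exp_0; now apply exp_le_exp. Qed.

Lemma is_derive_Rpower (s t : R) :
  0 < t -> is_derive (fun u => Rpower u s) t (s * Rpower t (s - 1)).
Proof. intro Ht; apply is_derive_Reals, derivable_pt_lim_power, Ht. Qed.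

Lemma is_derive_exp_opp (t : R) : is_derive (fun u => exp (- u)) t (- exp (- t)).
Proof. auto_derive; [easy | ring]. Qed.

Lemma continuous_Rpower (s t : R) : 0 < t -> continuous (fun u => Rpower u s) t.
Proof.
  intro Ht; apply (@ex_derive_continuous R_AbsRing R_NormedModule).
  eexists; now apply is_derive_Rpower.
Qed.

Lemma continuous_exp_opp (t : R) : continuous (fun u => exp (- u)) t.
Proof.
  apply (@ex_derive_continuous R_AbsRing R_NormedModule).
  eexists; apply is_derive_exp_opp.
Qed.

Lemma is_derive_Rpower_exp (s t : R) : 0 < t ->
  is_derive (fun u => Rpower u s * exp (- u)) t
    (s * gamma_integrand s t - gamma_integrand (s + 1) t).
Proof.
  intro Ht; unfold gamma_integrand; replace (s + 1 - 1) with s by ring.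
  replace (s * (Rpower t (s - 1) * exp (- t)) - Rpower t s * exp (- t))
    with (s * Rpower t (s - 1) * exp (- t) + Rpower t s * (- exp (- t))) by ring.
  apply (is_derive_mult (fun u => Rpower u s) (fun u => exp (- u)));
    [now apply is_derive_Rpower | apply is_derive_exp_opp | intros; apply Rmult_comm].
Qed.

Lemma gamma_integrand_pos (s t : R) : 0 < gamma_integrand s t.
Proof. apply Rmult_lt_0_compat; apply exp_pos. Qed.

Lemma gamma_integrand_continuous (s t : R) : 0 < t -> continuous (gamma_integrand s) t.
Proof.
  intro Ht; apply continuity_pt_filterlim.
  apply (continuity_pt_mult (fun u => Rpower u (s - 1)) (fun u => exp (- u)));
    apply continuity_pt_filterlim.
  - now apply continuous_Rpower.
  - apply continuous_exp_opp.
Qed.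

Lemma RInt_Rpower_le (s a : R) : 0 < s -> 0 < a <= 1 ->
  RInt (fun t => Rpower t (s - 1)) a 1 <= / s.
Proof.
  intros Hs Ha.
  replace (RInt (fun t => Rpower t (s - 1)) a 1) with (/ s * Rpower 1 s - / s * Rpower a s).
  - unfold Rpower at 1; rewrite ln_1, Rmult_0_r, exp_0.
    assert (0 < / s * Rpower a s)
      by (apply Rmult_lt_0_compat; [apply Rinv_0_lt_compat, Hs | apply exp_pos]).
    lra.
  - symmetry; apply is_RInt_unique.
    apply (@is_RInt_derive R_CompleteNormedModule (fun t => / s * Rpower t s));
      intros t Ht; rewrite Rmin_left, Rmax_right in Ht by lra.
    + replace (Rpower t (s - 1)) with (/ s * (s * Rpower t (s - 1))) by (field; lra).
      apply (is_derive_scal (fun u => Rpower u s)), is_derive_Rpower; lra.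
    + apply continuous_Rpower; lra.
Qed.

Lemma RInt_exp_opp_le (b : R) : 1 <= b -> RInt (fun t => exp (- t)) 1 b <= 1.
Proof.
  intro Hb.
  replace (RInt (fun t => exp (- t)) 1 b) with (- exp (- b) - - exp (- (1))).
  - pose proof (exp_pos (- b)); pose proof (exp_le_1 (- (1)) ltac:(lra)); lra.
  - symmetry; apply is_RInt_unique.
    apply (@is_RInt_derive R_CompleteNormedModule (fun t => - exp (- t))); intros t _.
    + auto_derive; [easy | ring].
    + apply continuous_exp_opp.
Qed.

(* On [(0, 1]] the integrand is at most [t^(s - 1)], on [[1, +oo)] at most [e^(-t)]. *)
Lemma RInt_gamma_integrand_le (s a b : R) :
  0 < s <= 1 -> 0 < a <= 1 -> 1 <= b -> RInt (gamma_integrand s) a b <= / s + 1.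
Proof.
  intros Hs Ha Hb.
  assert (Hex : forall u v, 0 < u -> 0 < v -> ex_RInt (gamma_integrand s) u v)
    by exact (ex_RInt_pos_axis _ (gamma_integrand_continuous s)).
  rewrite <- (RInt_Chasles (gamma_integrand s) a 1 b) by (apply Hex; lra).
  change plus with Rplus; apply Rplus_le_compat.
  - eapply Rle_trans; [|apply (RInt_Rpower_le s a); lra].
    apply RInt_le; [lra | apply Hex; lra | |].
    + apply (@ex_RInt_continuous R_CompleteNormedModule); intros t Ht.
      rewrite Rmin_left, Rmax_right in Ht by lra; apply continuous_Rpower; lra.
    + intros t Ht; unfold gamma_integrand.
      assert (0 < Rpower t (s - 1)) by apply exp_pos.
      pose proof (exp_le_1 (- t) ltac:(lra)); nra.
  - eapply Rle_trans; [|apply (RInt_exp_opp_le b); lra].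
    apply RInt_le; [lra | apply Hex; lra | |].
    + apply (@ex_RInt_continuous R_CompleteNormedModule); intros t _; apply continuous_exp_opp.
    + intros t Ht; unfold gamma_integrand.
      assert (Rpower t (s - 1) <= 1).
      { apply exp_le_1; assert (0 <= ln t) by (rewrite <- ln_1; apply ln_le; lra); nra. }
      pose proof (exp_pos (- t)); nra.
Qed.

Lemma is_Gamma_exists (s : R) : 0 < s <= 1 -> exists l, 0 < l /\ is_Gamma s l.
Proof.
  intro Hs; apply (is_RInt_gen_pos_bounded _ (fun t _ => gamma_integrand_pos s t)
                     (gamma_integrand_continuous s) (/ s + 1)).
  intros a b Ha Hb; now apply RInt_gamma_integrand_le.
Qed.

Lemma Rpower_exp_opp_at_0 (s : R) : 0 < s ->
  filterlim (fun t => Rpower t s * exp (- t)) (at_right 0) (locally 0).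
Proof.
  intro Hs; apply (filterlim_squeeze_0 _ (fun t => exp (s * ln t))).
  - exists (mkposreal 1 Rlt_0_1); intros t _ Ht; unfold Rpower.
    pose proof (exp_le_1 (- t) ltac:(lra)).
    pose proof (exp_pos (s * ln t)); pose proof (exp_pos (- t)); nra.
  - apply (filterlim_comp _ _ _ (fun t => s * ln t) exp _ (Rbar_locally m_infty));
      [|exact is_lim_exp_m].
    apply (filterlim_comp _ _ _ ln (fun u => s * u) _ (Rbar_locally m_infty));
      [exact is_lim_ln_0|].
    replace m_infty with (Rbar_mult s m_infty) at 2.
    + apply (is_lim_scal_l (fun u => u) s m_infty m_infty), is_lim_id.
    + rewrite Rbar_mult_comm; apply is_Rbar_mult_unique.
      apply is_Rbar_mult_m_infty_pos; simpl; lra.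
Qed.

(* [t^s e^(-t) = exp (t (s ln t / t - 1))] and [ln t / t -> 0]. *)
Lemma Rpower_exp_opp_at_infty (s : R) :
  filterlim (fun t => Rpower t s * exp (- t)) (Rbar_locally p_infty) (locally 0).
Proof.
  apply (filterlim_ext_loc (fun t => exp (t * (s * (ln t / t) - 1)))).
  { exists 0; intros t Ht; unfold Rpower; rewrite <- exp_plus; f_equal; field; lra. }
  apply (filterlim_comp _ _ _ (fun t => t * (s * (ln t / t) - 1)) exp _ (Rbar_locally m_infty));
    [|exact is_lim_exp_m].
  assert (Hlim : is_lim (fun t => s * (ln t / t) - 1) p_infty (-1)).
  { apply (is_lim_minus _ _ _ (Rbar_mult s 0) 1);
      [apply is_lim_scal_l, is_lim_div_ln_p | apply is_lim_const |].
    unfold is_Rbar_minus, is_Rbar_plus; simpl; do 2 f_equal; ring. }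
  replace m_infty with (Rbar_mult p_infty (-1)).
  - apply (is_lim_mult (fun t => t) _ p_infty p_infty (-1)); [apply is_lim_id | exact Hlim |].
    simpl; lra.
  - apply is_Rbar_mult_unique, is_Rbar_mult_p_infty_neg; simpl; lra.
Qed.

Lemma filter_prod_pos_axis :
  filter_prod (at_right 0) (Rbar_locally p_infty)
    (fun ab => forall t, Rmin (fst ab) (snd ab) <= t <= Rmax (fst ab) (snd ab) -> 0 < t).
Proof.
  apply (Filter_prod _ _ _ (fun a => 0 < a) (fun b => 0 < b)).
  - exists (mkposreal 1 Rlt_0_1); intros; auto.
  - exists 0; auto.
  - intros a b Ha Hb t Ht; simpl in Ht; pose proof (Rmin_glb_lt a b 0 Ha Hb); lra.
Qed.

Lemma is_RInt_gen_Derive_Rpower_exp (s : R) : 0 < s ->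
  is_RInt_gen (Derive (fun t => Rpower t s * exp (- t)))
    (at_right 0) (Rbar_locally p_infty) (0 - 0).
Proof.
  intro Hs; apply is_RInt_gen_Derive.
  - eapply filter_imp; [|exact filter_prod_pos_axis]; intros ab H t Ht.
    eexists; apply is_derive_Rpower_exp, H, Ht.
  - eapply filter_imp; [|exact filter_prod_pos_axis]; intros ab H t Ht; specialize (H t Ht).
    apply (continuous_ext_loc _ (fun u => s * gamma_integrand s u - gamma_integrand (s + 1) u)).
    + exists (mkposreal t H); intros u Hu; change (Rabs (u - t) < t) in Hu.
      apply Rabs_def2 in Hu; symmetry; apply is_derive_unique, is_derive_Rpower_exp; lra.
    + apply continuity_pt_filterlim.
      apply (continuity_pt_minus (fun u => s * gamma_integrand s u) (gamma_integrand (s + 1)));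
        [apply (continuity_pt_mult (fun _ => s)); [apply continuity_pt_const; now intros|]|];
        now apply continuity_pt_filterlim, gamma_integrand_continuous.
  - now apply Rpower_exp_opp_at_0.
  - apply Rpower_exp_opp_at_infty.
Qed.

(* Integration by parts against [t^s e^(-t)], which vanishes at both ends. *)
Lemma is_Gamma_succ (s l : R) : 0 < s -> is_Gamma s l -> is_Gamma (s + 1) (s * l).
Proof.
  intros Hs Hl.
  pose proof (is_RInt_gen_minus _ _ _ _
                (is_RInt_gen_scal (Fa := at_right 0) (Fb := Rbar_locally p_infty) _ s _ Hl)
                (is_RInt_gen_Derive_Rpower_exp s Hs)) as HI.
  replace (s * l) with (minus (scal s l) (0 - 0))
    by (unfold minus, plus, opp, scal; simpl; unfold mult; simpl; ring).
  eapply is_RInt_gen_ext; [|exact HI].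
  eapply filter_imp; [|exact filter_prod_pos_axis]; intros ab H t Ht.
  assert (HD : Derive (fun u => Rpower u s * exp (- u)) t
               = s * gamma_integrand s t - gamma_integrand (s + 1) t)
    by (apply is_derive_unique, is_derive_Rpower_exp, H; lra).
  rewrite HD.
  unfold minus, plus, opp, scal; simpl; unfold mult; simpl; ring.
Qed.

Lemma is_Gamma_shift (a : R) (k : nat) :
  0 < a <= 1 -> exists l, 0 < l /\ is_Gamma (INR k + a) l.
Proof.
  intro Ha; induction k as [|k [l [Hl HG]]].
  - rewrite Rplus_0_l; now apply is_Gamma_exists.
  - pose proof (pos_INR k).
    exists ((INR k + a) * l); split; [apply Rmult_lt_0_compat; lra|].
    rewrite S_INR; replace (INR k + 1 + a) with (INR k + a + 1) by ring.
    apply is_Gamma_succ; [lra | exact HG].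
Qed.

Lemma Gamma_shift (a : R) (k : nat) : 0 < a <= 1 ->
  0 < Gamma (INR k + a) /\ Gamma (INR (S k) + a) = (INR k + a) * Gamma (INR k + a).
Proof.
  intro Ha; destruct (is_Gamma_shift a k Ha) as [l [Hl HG]]; pose proof (pos_INR k).
  rewrite (Gamma_of_is_Gamma _ _ HG); split; [exact Hl|].
  apply Gamma_of_is_Gamma; rewrite S_INR.
  replace (INR k + 1 + a) with (INR k + a + 1) by ring.
  apply is_Gamma_succ; [lra | exact HG].
Qed.

Lemma U_diff_kernel (alpha : R) : 0 < alpha < 1 -> fading_memory_kernel (U_diff alpha).
Proof.
  intro Ha.
  assert (HUk : forall k, U_diff alpha (S k) = Gamma (INR k + alpha) / Gamma (INR k + 1)).
  { intro k; unfold U_diff; rewrite S_INR; f_equal; f_equal; ring. }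
  destruct (Gamma_shift alpha 0 ltac:(lra)) as [Ha0 _].
  destruct (Gamma_shift 1 0 ltac:(lra)) as [H10 _].
  apply (ratio_kernel alpha); [exact Ha | rewrite HUk; now apply Rdiv_lt_0_compat |].
  intros n Hn; destruct n as [|k]; [lia|]; rewrite !HUk.
  destruct (Gamma_shift alpha k ltac:(lra)) as [A1 A2].
  destruct (Gamma_shift 1 k ltac:(lra)) as [B1 B2].
  rewrite A2, B2, S_INR; pose proof (pos_INR k); field; lra.
Qed.

(** * Period-two limits *)

Section PeriodTwoSink.

Variables (c : R) (U : nat -> R) (G : R -> R) (x : nat -> R) (xo xe : R).
Hypothesis U_fading : fading_memory_kernel U.
Hypothesis G_cont : forall y, continuous G y.
Hypothesis x_rec : forall n,
  x (S n) = x 0%nat - c * sum_f_R0 (fun k => G (x k) * U (n - k + 1)%nat) n.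
Hypothesis x_odd : is_lim_seq (fun n => x (2 * n + 1)%nat) xo.
Hypothesis x_even : is_lim_seq (fun n => x (2 * n)%nat) xe.

Let y (k : nat) : R := G (x k).
Let ye (i : nat) : R := y (2 * i)%nat.
Let yo (i : nat) : R := y (2 * i + 1)%nat.
Let V (j : nat) : R := U (j + 1)%nat.
Let uo (j : nat) : R := U (2 * j + 1)%nat.
(* The index-0 entries of [ue] and [we] would involve [U 0], which the recursion never uses. *)
Let ue (j : nat) : R := match j with O => 0 | _ => U (2 * j)%nat end.
Let wo (j : nat) : R := U (2 * j + 1)%nat - U (2 * j + 2)%nat.
Let we (j : nat) : R := match j with O => 0 | _ => U (2 * j)%nat - U (2 * j + 1)%nat end.

Lemma x_succ_conv (n : nat) : x (S n) = x 0%nat - c * conv y V n.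
Proof. exact (x_rec n). Qed.

Lemma ye_cvg : is_lim_seq ye (G xe).
Proof. exact (filterlim_comp _ _ _ _ G _ (locally xe) _ x_even (G_cont xe)). Qed.

Lemma yo_cvg : is_lim_seq yo (G xo).
Proof. exact (filterlim_comp _ _ _ _ G _ (locally xo) _ x_odd (G_cont xo)). Qed.

Lemma wo_nonneg (j : nat) : 0 <= wo j.
Proof.
  unfold wo; replace (2 * j + 2)%nat with (S (2 * j + 1)) by lia.
  pose proof (kernel_decr U U_fading (2 * j + 1) ltac:(lia)); lra.
Qed.

Lemma we_nonneg (j : nat) : 0 <= we j.
Proof.
  destruct j as [|j]; [simpl; lra|]; unfold we.
  replace (2 * S j + 1)%nat with (S (2 * S j)) by lia.
  pose proof (kernel_decr U U_fading (2 * S j) ltac:(lia)); lra.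
Qed.

Lemma sum_wo_we (m : nat) : sum_f_R0 wo m + sum_f_R0 we m = U 1%nat - U (2 * m + 2)%nat.
Proof.
  induction m as [|m IH]; [simpl; unfold wo; simpl; ring|].
  rewrite !tech5; unfold wo at 2, we at 2.
  replace (2 * S m)%nat with (2 * m + 2)%nat by lia.
  replace (2 * S m + 1)%nat with (2 * m + 3)%nat by lia.
  replace (2 * (m + 1) + 1)%nat with (2 * m + 3)%nat by lia.
  replace (2 * S m + 2)%nat with (2 * m + 4)%nat by lia.
  lra.
Qed.

Lemma wo_summable : is_lim_seq (sum_f_R0 wo) (Series wo).
Proof.
  destruct (ex_finite_lim_seq_incr (sum_f_R0 wo) (U 1%nat)) as [W HW].
  - intro n; rewrite tech5; pose proof (wo_nonneg (S n)); lra.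
  - intro n; pose proof (sum_wo_we n); pose proof (cond_pos_sum we n we_nonneg).
    pose proof (kernel_pos U U_fading (2 * n + 2) ltac:(lia)); lra.
  - replace (Series wo) with W; [exact HW|].
    symmetry; apply is_series_unique.
    assert (Hn : is_lim_seq (sum_n wo) W).
    { apply (is_lim_seq_ext (sum_f_R0 wo)); [intro n; symmetry; apply sum_n_Reals | exact HW]. }
    exact Hn.
Qed.

Lemma we_summable : is_lim_seq (sum_f_R0 we) (U 1%nat - Series wo).
Proof.
  apply is_lim_seq_ext with (fun m => U 1%nat - U (2 * m + 2)%nat - sum_f_R0 wo m).
  { intro m; pose proof (sum_wo_we m); lra. }
  replace (U 1%nat - Series wo) with (U 1%nat - 0 - Series wo) by ring.
  apply is_lim_seq_minus'; [apply is_lim_seq_minus'; [apply is_lim_seq_const|] | exact wo_summable].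
  apply (is_lim_seq_subseq U 0 (fun m => (2 * m + 2)%nat)); [|exact (kernel_cvg_0 U U_fading)].
  apply eventually_subseq; intro n; lia.
Qed.

Lemma memory_odd (m : nat) :
  conv y V (2 * m + 1) = conv ye (fun j => U (2 * j + 2)%nat) m + conv yo uo m.
Proof.
  rewrite conv_split_parity; f_equal; apply conv_ext; intros j _; unfold V; f_equal; lia.
Qed.

(* [delay] pads the [2 m + 1] terms to an even number, so that they pair up by parity. *)
Lemma memory_even (m : nat) : conv y V (2 * m) = conv ye uo m + conv yo ue m.
Proof.
  rewrite <- conv_delay; replace (S (2 * m)) with (2 * m + 1)%nat by lia.
  rewrite conv_split_parity; f_equal; apply conv_ext; intros j _; unfold delay, V, uo, ue.
  - replace (2 * j + 1)%nat with (S (2 * j)) at 1 by lia; reflexivity.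
  - destruct j as [|j]; [reflexivity|].
    replace (2 * S j)%nat with (S (2 * j + 1)) by lia; f_equal; lia.
Qed.

Lemma memory_jump (m : nat) :
  conv y V (2 * m) - conv y V (2 * m + 1) = conv ye wo m + conv yo we m - yo m * U 1%nat.
Proof.
  rewrite memory_even, memory_odd.
  pose proof (conv_minus_r ye uo (fun j => U (2 * j + 2)%nat) m) as E1.
  pose proof (conv_change_head yo we (fun j => ue j - uo j) m
                ltac:(intros [|j] Hj; [lia | reflexivity])) as E2.
  rewrite conv_minus_r in E2.
  change (conv ye wo m = conv ye uo m - conv ye (fun j => U (2 * j + 2)%nat) m) in E1.
  change (ue 0 - uo 0 - we 0) with (0 - U 1%nat - 0) in E2.
  lra.
Qed.

Lemma conv_sum_uo (m : nat) :
  conv (fun i => ye i + yo i) uo m = conv y V (2 * m + 1) + conv ye wo m.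
Proof.
  rewrite conv_plus_l, memory_odd.
  pose proof (conv_minus_r ye uo (fun j => U (2 * j + 2)%nat) m) as E.
  change (conv ye wo m = conv ye uo m - conv ye (fun j => U (2 * j + 2)%nat) m) in E.
  lra.
Qed.

Lemma x_even_succ : is_lim_seq (fun m => x (S (2 * m + 1))) xe.
Proof.
  apply is_lim_seq_incr_1 in x_even; eapply is_lim_seq_ext; [|exact x_even].
  intro n; simpl; f_equal; lia.
Qed.

Lemma x_odd_succ : is_lim_seq (fun m => x (S (2 * m))) xo.
Proof. eapply is_lim_seq_ext; [|exact x_odd]; intro n; cbv beta; f_equal; lia. Qed.

Lemma period_two_difference : xo - xe = c * Series wo * (G xo - G xe).
Proof.
  assert (L1 : is_lim_seq (fun m => x (S (2 * m + 1)) - x (S (2 * m))) (xe - xo))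
    by exact (is_lim_seq_minus' _ _ _ _ x_even_succ x_odd_succ).
  assert (L2 : is_lim_seq (fun m => x (S (2 * m + 1)) - x (S (2 * m)))
      (c * (G xe * Series wo + G xo * (U 1%nat - Series wo) - G xo * U 1%nat))).
  { apply is_lim_seq_ext with (fun m => c * (conv ye wo m + conv yo we m - yo m * U 1%nat)).
    { intro m; rewrite <- memory_jump, !x_succ_conv; ring. }
    apply (is_lim_seq_scal_l _ c (Finite _)).
    apply is_lim_seq_minus'; [apply is_lim_seq_plus'|].
    - exact (is_lim_seq_conv_summable _ _ _ _ ye_cvg wo_nonneg wo_summable).
    - exact (is_lim_seq_conv_summable _ _ _ _ yo_cvg we_nonneg we_summable).
    - exact (is_lim_seq_scal_r _ (U 1%nat) _ yo_cvg). }
  pose proof (is_lim_seq_unique _ _ L1) as E1; rewrite (is_lim_seq_unique _ _ L2) in E1.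
  injection E1 as E1.
  replace (xo - xe) with (- (xe - xo)) by ring; rewrite <- E1; ring.
Qed.

(* [conv (ye + yo) uo] converges although its weights [U (2 j + 1)] are not summable. *)
Lemma period_two_sum : c <> 0 -> G xo + G xe = 0.
Proof.
  intro Hc.
  assert (Hconv : is_lim_seq (conv (fun i => ye i + yo i) uo)
                    ((x 0%nat - xe) / c + G xe * Series wo)).
  { eapply is_lim_seq_ext; [intro m; symmetry; apply conv_sum_uo|].
    apply is_lim_seq_plus'.
    - apply is_lim_seq_ext with (fun m => (x 0%nat - x (S (2 * m + 1))) / c).
      { intro m; rewrite x_succ_conv; field; exact Hc. }
      exact (is_lim_seq_scal_r _ (/ c) _
               (is_lim_seq_minus' _ _ _ _ (is_lim_seq_const (x 0%nat)) x_even_succ)).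
    - exact (is_lim_seq_conv_summable _ _ _ _ ye_cvg wo_nonneg wo_summable). }
  rewrite Rplus_comm.
  eapply (conv_divergent_weights_lim_0 _ uo _ _ (U 1%nat) (is_lim_seq_plus' _ _ _ _ ye_cvg yo_cvg)).
  - intro j; split; [apply Rlt_le, (kernel_pos U U_fading) | apply (kernel_le_1 U U_fading)]; lia.
  - exact (kernel_odd_divergent U U_fading).
  - exact Hconv.
Qed.

End PeriodTwoSink.

Theorem mainTheorem1 (alpha h : R) (G : R -> R) (U : nat -> R) (x : nat -> R)
  (xo xe : R) :
  0 < alpha < 1 ->
  0 < h ->
  (forall y, continuous G y) ->
  ((forall n, (1 <= n)%nat -> U n = U_frac alpha n) \/
   (forall n, (1 <= n)%nat -> U n = U_diff alpha n)) ->
  (forall n, x (S n) = x 0%nat - Rpower h alpha / Gamma alpha *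
       sum_f_R0 (fun k => G (x k) * U (n - k + 1)%nat) n) ->
  is_lim_seq (fun n => x (2 * n + 1)%nat) xo ->
  is_lim_seq (fun n => x (2 * n)%nat) xe ->
  G xo + G xe = 0 /\
  xo - xe = W_alpha U / Gamma alpha * Rpower h alpha * (G xo - G xe).
Proof.
  intros Halpha _ HG HU Hx Hxo Hxe.
  assert (HGamma : 0 < Gamma alpha).
  { destruct (Gamma_shift alpha 0 ltac:(lra)) as [H _]; now rewrite Rplus_0_l in H. }
  assert (Hc : 0 < Rpower h alpha / Gamma alpha)
    by (apply Rdiv_lt_0_compat; [apply exp_pos | exact HGamma]).
  assert (HK : fading_memory_kernel U).
  { destruct HU as [HU|HU]; eapply fading_memory_kernel_ext; try exact HU.
    - now apply U_frac_kernel.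
    - now apply U_diff_kernel. }
  split.
  - apply (period_two_sum (Rpower h alpha / Gamma alpha) U G x xo xe); auto; lra.
  - rewrite (period_two_difference (Rpower h alpha / Gamma alpha) U G x xo xe); auto.
    unfold W_alpha, Rdiv; ring.
Qed.
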